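(* Let $F:[0,1]^n\to\mathbb{R}$ be differentiable and $\epsilon>0$ be such that for all $x,y\in[0,1]^n$ with $x-y\in\mathbb{R}^n_{+}\cup\mathbb{R}^n_{-}$, $F(y)\le F(x)+\nabla F(x)^\top(y-x)+\epsilon$. Then $F$ is $\epsilon$-up-concave.
   Context: $F:[0,1]^n\to\mathbb{R}$ is $\epsilon$-up-concave ($\epsilon\ge0$) if for every $u\in\mathbb{R}^n_{+}$, $x\in[0,1]^n$, the function $G_{x,u}(t)=F(tu+x)$ satisfies $G_{x,u}(\lambda t_1+(1-\lambda)t_2)\ge\lambda G_{x,u}(t_1)+(1-\lambda)G_{x,u}(t_2)-\epsilon$ for all $\lambda\in[0,1]$ and $t_1,t_2\in\mathbb{R}$ such that $t_1u+x$, $t_2u+x$, and $x+\lambda t_1u+(1-\lambda)t_2u$ lie in $[0,1]^n$. *)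

From HB Require Import structures.
From mathcomp Require Import all_boot all_order all_algebra.
From mathcomp Require Import all_classical all_reals all_analysis.
Set Implicit Arguments. Unset Strict Implicit. Unset Printing Implicit Defensive.
Import Order.TTheory GRing.Theory Num.Theory.
Import numFieldNormedType.Exports.
Local Open Scope ring_scope.

Definition in_cube (R : realType) (n : nat) (x : 'rV[R]_n) : Prop :=
  forall i : 'I_n, 0 <= x ord0 i <= 1.

Definition nonneg_vec (R : realType) (n : nat) (u : 'rV[R]_n) : Prop :=
  forall i : 'I_n, 0 <= u ord0 i.

Definition eps_up_concave (R : realType) (n : nat) (F : 'rV[R]_n -> R)
    (eps : R) : Prop :=
  forall (u x : 'rV[R]_n), nonneg_vec u -> in_cube x ->
  forall (lam t1 t2 : R), 0 <= lam <= 1 ->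
    in_cube (t1 *: u + x) -> in_cube (t2 *: u + x) ->
    in_cube (x + (lam * t1 + (1 - lam) * t2) *: u) ->
    F ((lam * t1 + (1 - lam) * t2) *: u + x) >=
      lam * F (t1 *: u + x) + (1 - lam) * F (t2 *: u + x) - eps.

From HB Require Import structures.
From mathcomp Require Import all_boot all_order all_algebra.
From mathcomp Require Import all_classical all_reals all_analysis.
From mathcomp Require Import lra.
Import Order.TTheory GRing.Theory Num.Theory.
Import numFieldNormedType.Exports.
Set Implicit Arguments. Unset Strict Implicit. Unset Printing Implicit Defensive.
Local Open Scope ring_scope.

(** On a line [t |-> t u + x] with [u >= 0] any two points are comparable, so
    the tangent inequality may be applied at [q = (lam t1 + (1 - lam) t2) u + x]
    towards both [p1 = t1 u + x] and [p2 = t2 u + x].  Since [q] is the convex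
    combination [lam p1 + (1 - lam) p2], averaging the two inequalities with
    weights [lam] and [1 - lam] cancels the linear terms and leaves exactly the
    [eps]-concavity inequality. *)

Section TangentInequality.
Variables (R : realFieldType) (V : lmodType R).

Lemma linear_convex_comb_subr (L : {linear V -> R}) (lam : R) (p1 p2 q : V) :
  q = lam *: p1 + (1 - lam) *: p2 ->
  lam * L (p1 - q) + (1 - lam) * L (p2 - q) = 0.
Proof.
move=> q_def; rewrite -!linearZ -linearD !scalerBr addrACA -opprD -scalerDl.
by rewrite subrKC scale1r -q_def subrr linear0.
Qed.

Lemma tangent_ineq_convex_comb (F : V -> R) (L : {linear V -> R})
    (eps lam : R) (p1 p2 q : V) :
  0 <= lam <= 1 -> q = lam *: p1 + (1 - lam) *: p2 ->
  F p1 <= F q + L (p1 - q) + eps ->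
  F p2 <= F q + L (p2 - q) + eps ->
  lam * F p1 + (1 - lam) * F p2 - eps <= F q.
Proof.
move=> /andP[lam_ge0 lam_le1] q_def tangent1 tangent2.
have := linear_convex_comb_subr L q_def.
have := ler_wpM2l lam_ge0 tangent1.
have := @ler_wpM2l _ (1 - lam) _ _ _ tangent2; rewrite subr_ge0 => /(_ lam_le1).
lra.
Qed.

End TangentInequality.

Section MonotoneLines.
Variables (R : realType) (n : nat).
Implicit Types (u x : 'rV[R]_n) (a b : R).

Lemma subr_line_points u x a b : (a *: u + x) - (b *: u + x) = (a - b) *: u.
Proof. by rewrite opprD addrACA subrr addr0 scalerBl. Qed.

Lemma line_convex_comb u x lam t1 t2 :
  (lam * t1 + (1 - lam) * t2) *: u + x =
  lam *: (t1 *: u + x) + (1 - lam) *: (t2 *: u + x).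
Proof.
by rewrite !scalerDr !scalerA addrACA -scalerDl -scalerDl subrKC scale1r.
Qed.

Lemma nonneg_vecZ u a : 0 <= a -> nonneg_vec u -> nonneg_vec (a *: u).
Proof. by move=> a_ge0 u_ge0 i; rewrite mxE mulr_ge0. Qed.

Lemma line_points_comparable u x a b : nonneg_vec u ->
  nonneg_vec ((a *: u + x) - (b *: u + x)) \/
  nonneg_vec ((b *: u + x) - (a *: u + x)).
Proof.
move=> u_ge0; rewrite !subr_line_points.
have [ab|ba] := leP b a; [left | right]; apply: nonneg_vecZ => //.
  by rewrite subr_ge0.
by rewrite subr_ge0 ltW.
Qed.

End MonotoneLines.

Theorem mainTheorem6 (R : realType) (n : nat) (F : 'rV[R]_n -> R) (eps : R) :
  0 < eps ->
  (forall x : 'rV[R]_n, in_cube x -> differentiable F x) ->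
  (forall x y : 'rV[R]_n, in_cube x -> in_cube y ->
     (nonneg_vec (x - y) \/ nonneg_vec (y - x)) ->
     F y <= F x + 'd F x (y - x) + eps) ->
  eps_up_concave F eps.
Proof.
move=> _ _ tangent u x u_ge0 _ lam t1 t2 lam01 in_p1 in_p2 in_q.
rewrite addrC in in_q.
set q := (lam * t1 + (1 - lam) * t2) *: u + x.
apply: (tangent_ineq_convex_comb (F := F) (L := 'd F q) (eps := eps) lam01
         (line_convex_comb u x lam t1 t2));
  apply: tangent => //; exact: line_points_comparable.
Qed.
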